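(* Fix reals $a<b$ with $\tau_0\notin[a,b]$, $S=T\cap[a,b]$, $m\ge1$, points $q_1,\ldots,q_r\in\mathbf M$, a subset $\mathbf\Pi\subseteq\mathbf M$ and pairwise disjoint sets $\Pi_1,\ldots,\Pi_d\subseteq\mathbf M$ with $\mathbf\Pi\subseteq\Pi_1\cup\cdots\cup\Pi_d$. Suppose reals $\alpha_{ij}\le\beta_{ij}$ ($1\le i\le r$, $1\le j\le d$) satisfy $\alpha_{ij}\le\tau(q_i,q)\le\beta_{ij}$ for all $q\in\Pi_j$, and reals $a_{ij}\le b_{ij}$ ($1\le i\le j\le d$) satisfy $\tau(u,v)\in[a_{ij},b_{ij}]$ whenever $u\in\Pi_i$, $v\in\Pi_j$, $u\ne v$, $\tau(u,v)\in[a,b]$. Let $\mathcal A$ be any set of constraints satisfied by the tuple $(x_{ij}^{(k)}(C),y_{ij}^{(k)}(C))$ of every $S$-code $C\subset\mathbf\Pi$. Let $c^*$ be the supremum of $c_1+\cdots+c_d$ over real variables $c_j$, $x_{ij}^{(k)}$ ($1\le i\le j\le d$, with $x_{ji}^{(k)}:=x_{ij}^{(k)}$), $y_{ij}^{(k)}$ ($1\le i\le r$, $1\le j\le d$), $k=0,\ldots,2m-1$, subject to: (11) for each $k=0,\ldots,2m-1$ the symmetric $(r+d)\times(r+d)$ matrix $\Gamma_k$ with entries $\Phi_k(\tau(q_i,q_{i'}))$ in position $(i,i')$ ($i,i'\le r$), $\sum_{l=0}^k p_{kl}y_{ij}^{(l)}$ in positions $(i,r+j)$ and $(r+j,i)$,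 and $\sum_{l=0}^k p_{kl}x_{jj'}^{(l)}$ in position $(r+j,r+j')$, is positive semidefinite; (13) $H_m(y_{ij}^{(0)},\ldots,y_{ij}^{(2m-1)},[\alpha_{ij},\beta_{ij}])\succeq0$ for all $i\le r$, $j\le d$; (14) $H_m(x_{ij}^{(0)},\ldots,x_{ij}^{(2m-1)},[a_{ij},b_{ij}])\succeq0$ for $1\le i<j\le d$; (15) $H_m(z_{0,i},\ldots,z_{2m-1,i},[a_{ii},b_{ii}])\succeq0$ for $i=1,\ldots,d$, where $z_{k,i}:=x_{ii}^{(k)}-c_i\tau_0^k$ for $k\ge1$ and $z_{0,i}:=x_{ii}^{(0)}-c_i$; (16) the constraints $\mathcal A$; (17) $y_{ij}^{(0)}=c_j\ge0$ for all $i,j$, and the $(d+1)\times(d+1)$ matrix $\begin{pmatrix}1&c^{T}\\ c&(x_{ij}^{(0)})_{i,j=1}^d\end{pmatrix}$, $c=(c_1,\ldots,c_d)^T$, is positive semidefinite. Then $A(\mathbf\Pi,S)\le c^*$.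
   Context: $\mathbf M$ is a 2-point-homogeneous space with associated real function $\tau(x,y)$, $\tau_0:=\tau(x,x)$, $T=\{\tau(x,y):x,y\in\mathbf M\}$, and zonal spherical functions $\Phi_k(t)=\sum_{l=0}^k p_{kl}t^l$ assumed to be real polynomials of degree $k$ with $\Phi_k(\tau_0)=1$ such that for every finite $\{x_1,\ldots,x_N\}\subset\mathbf M$ and $k\ge0$ the matrix $(\Phi_k(\tau(x_i,x_j)))$ is positive semidefinite. An $S$-code is a finite $C\subset\mathbf M$ with $\tau(x,y)\in S$ for all distinct $x,y\in C$; $A(\mathbf\Pi,S)$ is the largest cardinality of an $S$-code contained in $\mathbf\Pi$. For an $S$-code $C\subset\mathbf\Pi$ and $C_j:=C\cap\Pi_j$: $x_{ij}^{(k)}(C)=\sum_{u\in C_i}\sum_{v\in C_j}\tau(u,v)^k$ (including $u=v$ when $i=j$) and $y_{ij}^{(k)}(C)=\sum_{q\in C_j}\tau(q_i,q)^k$, with $\tau^0:=1$. For reals $s_0,\ldots,s_{2m-1}$ and $\alpha\le\beta$: $R_m=(s_{i+j-2})_{i,j=1}^m$, $F_m^+(\alpha)=(s_{i+j-1}-\alpha s_{i+j-2})$, $F_m^-(\beta)=(\beta s_{i+j-2}-s_{i+j-1})$, $H_m(s_0,\ldots,s_{2m-1},[\alpha,\beta])=\operatorname{diag}(R_m,F_m^+(\alpha),F_m^-(\beta))$. *)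

From HB Require Import structures.
From mathcomp Require Import all_boot all_order all_algebra.
From mathcomp Require Import boolp classical_sets reals constructive_ereal ereal.

Set Implicit Arguments.
Unset Strict Implicit.
Unset Printing Implicit Defensive.

Import Order.TTheory GRing.Theory Num.Theory.
Local Open Scope ring_scope.
Local Open Scope classical_set_scope.

Section Defs.
Variable R : realType.

Definition psd (n : nat) (A : 'M[R]_n) : Prop :=
  A^T = A /\ forall v : 'cV[R]_n, 0 <= (v^T *m A *m v) 0 0.

(* H_m(s_0,...,s_{2m-1},[al,be]) = diag(R_m, F_m^+(al), F_m^-(be));
   0-indexed: (R_m)_{ij} = s_(i+j), etc. *)
Definition Hankel_R (m : nat) (s : nat -> R) : 'M[R]_m :=
  \matrix_(i < m, j < m) s (i + j)%N.
Definition Hankel_Fp (m : nat) (s : nat -> R) (al : R) : 'M[R]_m :=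
  \matrix_(i < m, j < m) (s (i + j).+1 - al * s (i + j)%N).
Definition Hankel_Fm (m : nat) (s : nat -> R) (be : R) : 'M[R]_m :=
  \matrix_(i < m, j < m) (be * s (i + j)%N - s (i + j).+1).
Definition Hm (m : nat) (s : nat -> R) (al be : R) : 'M[R]_(m + (m + m)) :=
  block_mx (Hankel_R m s) 0 0 (block_mx (Hankel_Fp m s al) 0 0 (Hankel_Fm m s be)).

Variable M : choiceType.
Variable tau : M -> M -> R.

Definition S_of (a b : R) : set R :=
  range (fun p : M * M => tau p.1 p.2) `&` [set t | a <= t <= b].

Definition is_code (S : set R) (C : seq M) : Prop :=
  uniq C /\ forall u v, u \in C -> v \in C -> u != v -> S (tau u v).

Definition A_code (Pi : set M) (S : set R) : \bar R :=
  ereal_sup [set ((size C)%:R)%:E | C in [set C : seq M | is_code S C /\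
                                        forall u, u \in C -> Pi u]].

Definition xC (d : nat) (Pis : 'I_d -> set M) (C : seq M) (k : nat) (i j : 'I_d) : R :=
  \sum_(u <- C | u \in Pis i) \sum_(v <- C | v \in Pis j) tau u v ^+ k.
Definition yC (r d : nat) (q : 'I_r -> M) (Pis : 'I_d -> set M) (C : seq M)
    (k : nat) (i : 'I_r) (j : 'I_d) : R :=
  \sum_(v <- C | v \in Pis j) tau (q i) v ^+ k.

(* Gamma_k of constraint (11); Phi k is the zonal polynomial, p_kl = (Phi k)`_l *)
Definition Gamma (r d : nat) (q : 'I_r -> M) (Phi : nat -> {poly R}) (k : nat)
    (x : nat -> 'I_d -> 'I_d -> R) (y : nat -> 'I_r -> 'I_d -> R) : 'M[R]_(r + d) :=
  block_mx (\matrix_(i < r, i' < r) (Phi k).[tau (q i) (q i')])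
           (\matrix_(i < r, j < d) \sum_(l < k.+1) (Phi k)`_l * y l i j)
           (\matrix_(j < d, i < r) \sum_(l < k.+1) (Phi k)`_l * y l i j)
           (\matrix_(j < d, j' < d) \sum_(l < k.+1) (Phi k)`_l * x l j j').

(* Feasible set of the SDP (11),(13)-(17). Variables are indexed by all k : nat;
   only k <= 2m-1 enter (11),(13)-(15). x is symmetric: x_{ji} := x_{ij}. *)
Definition feasible (m r d : nat) (q : 'I_r -> M) (Phi : nat -> {poly R}) (tau0 : R)
    (al be : 'I_r -> 'I_d -> R) (aa bb : 'I_d -> 'I_d -> R)
    (Acons : (nat -> 'I_d -> 'I_d -> R) -> (nat -> 'I_r -> 'I_d -> R) -> Prop)
    (c : 'I_d -> R) (x : nat -> 'I_d -> 'I_d -> R) (y : nat -> 'I_r -> 'I_d -> R) : Prop :=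
  (forall k i j, x k i j = x k j i) /\
      (forall k, (k < 2 * m)%N -> psd (Gamma q Phi k x y)) /\
      (forall i j, psd (Hm m (fun k => y k i j) (al i j) (be i j))) /\
      (forall i j : 'I_d, (i < j)%N -> psd (Hm m (fun k => x k i j) (aa i j) (bb i j))) /\
      (forall i : 'I_d, psd (Hm m (fun k => x k i i - c i * tau0 ^+ k) (aa i i) (bb i i))) /\
      Acons x y /\
      [/\ (forall i j, y 0%N i j = c j), (forall j, 0 <= c j) &
          psd (block_mx (1 : 'M[R]_1) (\row_(j < d) c j) (\col_(i < d) c i)
                        (\matrix_(i < d, j < d) x 0%N i j))].

Definition c_star (m r d : nat) (q : 'I_r -> M) (Phi : nat -> {poly R}) (tau0 : R)
    (al be : 'I_r -> 'I_d -> R) (aa bb : 'I_d -> 'I_d -> R)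
    (Acons : (nat -> 'I_d -> 'I_d -> R) -> (nat -> 'I_r -> 'I_d -> R) -> Prop) : \bar R :=
  ereal_sup [set (\sum_(j < d) c j)%:E | c in
     [set c : 'I_d -> R | exists x y, feasible m q Phi tau0 al be aa bb Acons c x y]].

End Defs.

From HB Require Import structures.
From mathcomp Require Import all_boot all_order all_algebra.
From mathcomp Require Import boolp classical_sets reals constructive_ereal ereal.
From mathcomp Require Import ring.

Set Implicit Arguments.
Unset Strict Implicit.
Unset Printing Implicit Defensive.

Import Order.TTheory GRing.Theory Num.Theory.
Local Open Scope ring_scope.
Local Open Scope classical_set_scope.

(* Every S-code C in Pi yields a feasible point of the program: c_j = |C cap Pi_j|
   together with the statistics x(C), y(C).  Gamma_k is then a congruence transform
   of the Gram matrix of Phi_k on q_1, ..., q_r and the points of C; each localizing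
   matrix in (13)-(15) is a sum of the matrices H_m(1, t, ..., t^(2m-1), [al, be]),
   which are diagonal blocks of rank one and psd for t in [al, be]; and the matrix of
   (17) is the outer product of (1, c).  Hence |C| = c_1 + ... + c_d <= c^*. *)

Section PsdTheory.
Variable R : realType.

Lemma psdD n (A B : 'M[R]_n) : psd A -> psd B -> psd (A + B).
Proof.
move=> [tA qA] [tB qB]; split; first by rewrite linearD /= tA tB.
by move=> v; rewrite mulmxDr mulmxDl mxE addr_ge0.
Qed.

Lemma psd_sum (I : Type) (s : seq I) (P : pred I) n (F : I -> 'M[R]_n) :
  (forall i, P i -> psd (F i)) -> psd (\sum_(i <- s | P i) F i).
Proof.
move=> psdF; apply: (big_ind (@psd R n)) => //; last exact: psdD.
by split=> [|v]; rewrite ?trmx0 // mulmx0 mul0mx mxE.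
Qed.

Lemma psd_scale_outer n (c : R) (w : 'cV[R]_n) : 0 <= c -> psd (c *: (w *m w^T)).
Proof.
move=> c_ge0; split; first by rewrite linearZ /= trmx_mul trmxK.
move=> v; rewrite -scalemxAr -scalemxAl mxE mulr_ge0 // mulmxA -[v^T *m w *m w^T *m v]mulmxA.
have -> : w^T *m v = (v^T *m w)^T by rewrite trmx_mul trmxK.
by rewrite mxE big_ord1 [X in _ * X]mxE -expr2 sqr_ge0.
Qed.

Lemma psd_block_diag n1 n2 (A : 'M[R]_n1) (B : 'M[R]_n2) :
  psd A -> psd B -> psd (block_mx A 0 0 B).
Proof.
move=> [tA qA] [tB qB]; split; first by rewrite tr_block_mx tA tB !trmx0.
move=> v; rewrite -[v]vsubmxK tr_col_mx mul_row_block !mulmx0 addr0 add0r.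
by rewrite mul_row_col mxE addr_ge0.
Qed.

Lemma psd_congr n1 n2 (A : 'M[R]_(n1, n2)) (G : 'M[R]_n1) :
  psd G -> psd (A^T *m G *m A).
Proof.
move=> [tG qG]; split; first by rewrite !trmx_mul trmxK tG mulmxA.
move=> v; have -> : v^T *m (A^T *m G *m A) *m v = (A *m v)^T *m G *m (A *m v).
  by rewrite trmx_mul !mulmxA.
exact: qG.
Qed.

Lemma psd_moment_block d (c : 'I_d -> R) :
  psd (block_mx (1 : 'M[R]_1) (\row_j c j) (\col_i c i) (\matrix_(i, j) (c i * c j))).
Proof.
pose w : 'cV[R]_(1 + d) := col_mx 1 (\col_i c i).
have -> : block_mx 1 (\row_j c j) (\col_i c i) (\matrix_(i, j) (c i * c j)) =
          1 *: (w *m w^T).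
  rewrite scale1r tr_col_mx mul_col_row trmx1.
  by congr block_mx; apply/matrixP => i j; rewrite ?ord1 !mxE big_ord1 !mxE ?mulr1 ?mul1r.
exact/psd_scale_outer/ler01.
Qed.

End PsdTheory.

Section LocalizingMatrix.
Variables (R : realType) (m : nat) (al be : R).

Lemma HmD (f g : nat -> R) :
  Hm m (fun k => f k + g k) al be = Hm m f al be + Hm m g al be.
Proof.
rewrite /Hm !add_block_mx !addr0.
by congr block_mx; [|congr block_mx]; apply/matrixP=> i j; rewrite !mxE; ring.
Qed.

Lemma Hm0 : Hm m (fun _ => 0) al be = 0.
Proof.
apply: (@addrI _ (Hm m (fun _ => 0) al be)); rewrite addr0 -HmD.
by congr Hm; apply: funext => k; rewrite addr0.
Qed.

Lemma Hm_sum (I : Type) (s : seq I) (P : pred I) (f : I -> nat -> R) :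
  Hm m (fun k => \sum_(x <- s | P x) f x k) al be = \sum_(x <- s | P x) Hm m (f x) al be.
Proof.
elim: s => [|x s IHs].
  by rewrite big_nil -Hm0; congr Hm; apply: funext => k; rewrite big_nil.
rewrite big_cons -IHs; case: ifP => Px; last first.
  by congr Hm; apply: funext => k; rewrite big_cons Px.
by rewrite -HmD; congr Hm; apply: funext => k; rewrite big_cons Px.
Qed.

Lemma Hm_powers_psd (t : R) : al <= t <= be -> psd (Hm m (fun k => t ^+ k) al be).
Proof.
move=> /andP[al_t t_be]; pose w : 'cV[R]_m := \col_(i < m) t ^+ i.
have outerE c (A : 'M[R]_m) : (forall i j : 'I_m, A i j = c * t ^+ (i + j)) ->
    A = c *: (w *m w^T).
  by move=> Aij; apply/matrixP=> i j; rewrite !mxE big_ord1 !mxE Aij exprD.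
apply: psd_block_diag.
  rewrite (outerE 1 (Hankel_R m _)); first exact: psd_scale_outer.
  by move=> i j; rewrite mxE mul1r.
apply: psd_block_diag.
  rewrite (outerE (t - al) (Hankel_Fp m _ al)); first by apply: psd_scale_outer; rewrite subr_ge0.
  by move=> i j; rewrite mxE exprS; ring.
rewrite (outerE (be - t) (Hankel_Fm m _ be)); first by apply: psd_scale_outer; rewrite subr_ge0.
by move=> i j; rewrite mxE exprS; ring.
Qed.

Lemma Hm_power_sum_psd (I : eqType) (s : seq I) (P : pred I) (F : I -> R) :
  {in s, forall x, P x -> al <= F x <= be} ->
  psd (Hm m (fun k => \sum_(x <- s | P x) F x ^+ k) al be).
Proof.
move=> F_in; rewrite (Hm_sum s P (fun x k => F x ^+ k)) big_seq_cond.
by apply: psd_sum => x /andP[xs Px]; apply: Hm_powers_psd; apply: F_in.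
Qed.

Lemma Hm_power_sum2_psd (I J : eqType) (s : seq I) (P : pred I) (t : seq J)
    (Q : I -> pred J) (F : I -> J -> R) :
  (forall x y, x \in s -> y \in t -> P x -> Q x y -> al <= F x y <= be) ->
  psd (Hm m (fun k => \sum_(x <- s | P x) \sum_(y <- t | Q x y) F x y ^+ k) al be).
Proof.
move=> F_in; rewrite (Hm_sum s P (fun x k => \sum_(y <- t | Q x y) F x y ^+ k)).
rewrite big_seq_cond; apply: psd_sum => x /andP[xs Px].
by apply: Hm_power_sum_psd => y yt; apply: F_in.
Qed.

End LocalizingMatrix.

Section CodeStatistics.
Variables (R : realType) (M : choiceType) (tau : M -> M -> R).
Variables (d : nat) (Pis : 'I_d -> set M) (C : seq M).

Definition part_size (j : 'I_d) : R := \sum_(v <- C | v \in Pis j) 1.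

Lemma yC0 r (q : 'I_r -> M) i j : yC tau q Pis C 0 i j = part_size j.
Proof. by apply: eq_bigr => v _; rewrite expr0. Qed.

Lemma xC0 i j : xC tau Pis C 0 i j = part_size i * part_size j.
Proof.
rewrite /xC /part_size big_distrl /=; apply: eq_bigr => u _.
by rewrite mul1r; apply: eq_bigr => v _; rewrite expr0.
Qed.

Lemma moment_code_psd :
  psd (block_mx (1 : 'M[R]_1) (\row_j part_size j) (\col_i part_size i)
                (\matrix_(i, j) xC tau Pis C 0 i j)).
Proof.
have -> : \matrix_(i, j) xC tau Pis C 0 i j = \matrix_(i, j) (part_size i * part_size j).
  by apply/matrixP => i j; rewrite !mxE xC0.
exact: psd_moment_block.
Qed.

Lemma part_size_ge0 j : 0 <= part_size j.
Proof. exact: sumr_ge0. Qed.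

Hypothesis tau_sym : forall u v, tau u v = tau v u.

Lemma xC_sym k i j : xC tau Pis C k i j = xC tau Pis C k j i.
Proof.
rewrite /xC exchange_big; apply: eq_bigr => u _.
by apply: eq_bigr => v _; rewrite tau_sym.
Qed.

Hypothesis Pis_disj : forall i j : 'I_d, i != j -> Pis i `&` Pis j = set0.

Lemma size_part_sum :
  {in C, forall v, exists j, Pis j v} -> (size C)%:R = \sum_(j < d) part_size j.
Proof.
move=> C_cover.
have one_part v : v \in C -> \sum_(j < d) (if v \in Pis j then 1 else 0) = 1 :> R.
  move=> /C_cover[j0 vj0]; rewrite (bigD1 j0) //= (mem_set vj0) big1 ?addr0 // => j ji0.
  case: ifP => //; rewrite in_setE => vj.
  by have := Pis_disj ji0; rewrite -subset0 => /(_ v (conj vj vj0)).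
rewrite -sum1_size natr_sum big_seq.
rewrite (eq_bigr (fun v => \sum_(j < d) if v \in Pis j then 1 else 0)); last first.
  by move=> v /one_part.
rewrite -big_seq exchange_big /=.
by apply: eq_bigr => j _; rewrite /part_size [RHS]big_mkcond.
Qed.

Variable tau0 : R.
Hypothesis tau_diag : forall u, tau u u = tau0.

Lemma xC_diag_offdiag k i : uniq C ->
  xC tau Pis C k i i - part_size i * tau0 ^+ k =
  \sum_(u <- C | u \in Pis i) \sum_(v <- C | (v \in Pis i) && (v != u)) tau u v ^+ k.
Proof.
move=> C_uniq; rewrite /xC /part_size big_distrl -sumrB.
rewrite big_seq_cond [RHS]big_seq_cond; apply: eq_bigr => u /andP[uC ui].
rewrite big_mkcond (bigD1_seq u) //= ui tau_diag mul1r addrC addrK.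
by rewrite big_mkcondl.
Qed.

End CodeStatistics.

Arguments part_size {R M d} Pis C j.

Lemma horner_power_sum (R : comNzRingType) (I : Type) (s : seq I) (P : pred I)
    (f : I -> R) (p : {poly R}) n :
  (size p <= n)%N ->
  \sum_(l < n) p`_l * \sum_(v <- s | P v) f v ^+ l = \sum_(v <- s | P v) p.[f v].
Proof.
move=> p_le; under eq_bigr do rewrite big_distrr.
by rewrite exchange_big; apply: eq_bigr => v _; rewrite (horner_coef_wide _ p_le).
Qed.

Lemma sum_seq_indicator (R : nzSemiRingType) (I : Type) (s : seq I) (P : pred I)
    (F : I -> R) :
  \sum_(v <- s | P v) F v =
  \sum_(l < size s) F (tnth (in_tuple s) l) * (P (tnth (in_tuple s) l))%:R.
Proof.
rewrite big_tnth big_mkcond; apply: eq_bigr => l _.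
by case: ifP; rewrite ?mulr1 ?mulr0.
Qed.

Lemma horner_power_sum2 (R : comNzRingType) (I J : Type) (s : seq I) (P : pred I)
    (t : seq J) (Q : pred J) (f : I -> J -> R) (p : {poly R}) n :
  (size p <= n)%N ->
  \sum_(l < n) p`_l * \sum_(u <- s | P u) \sum_(v <- t | Q v) f u v ^+ l =
  \sum_(u <- s | P u) \sum_(v <- t | Q v) p.[f u v].
Proof.
move=> p_le; under eq_bigr do rewrite big_distrr.
by rewrite exchange_big; apply: eq_bigr => u _; rewrite horner_power_sum.
Qed.

Section ZonalGram.
Variables (R : realType) (M : choiceType) (tau : M -> M -> R).

Definition zonal_gram (p : {poly R}) N (pts : 'I_N -> M) : 'M[R]_N :=
  \matrix_(i, j) p.[tau (pts i) (pts j)].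

Variables (r : nat) (q : 'I_r -> M) (d : nat) (Pis : 'I_d -> set M) (C : seq M).

Definition code_points (i : 'I_(r + size C)) : M :=
  match split i with inl i => q i | inr l => tnth (in_tuple C) l end.

Definition part_incidence : 'M[R]_(size C, d) :=
  \matrix_(l, j) (tnth (in_tuple C) l \in Pis j)%:R.

Definition code_weights : 'M[R]_(r + size C, r + d) := block_mx 1%:M 0 0 part_incidence.

Lemma code_points_lshift i : code_points (lshift (size C) i) = q i.
Proof. by rewrite /code_points; have /= -> := unsplitK (inl i : 'I_r + 'I_(size C)). Qed.

Lemma code_points_rshift l : code_points (rshift r l) = tnth (in_tuple C) l.
Proof. by rewrite /code_points; have /= -> := unsplitK (inr l : 'I_r + 'I_(size C)). Qed.

Hypothesis tau_sym : forall u v, tau u v = tau v u.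
Variables (Phi : nat -> {poly R}) (k : nat).
Hypothesis Phi_size : (size (Phi k) <= k.+1)%N.

Lemma Gamma_code_congr :
  Gamma tau q Phi k (xC tau Pis C) (yC tau q Pis C) =
  code_weights^T *m zonal_gram (Phi k) code_points *m code_weights.
Proof.
rewrite /code_weights tr_block_mx !trmx0 trmx1 -[zonal_gram _ _]submxK !mulmx_block.
rewrite !mul1mx !mul0mx !mulmx0 !addr0 !add0r !mulmx1 -mulmxA /Gamma.
congr block_mx; apply/matrixP => i j; rewrite !mxE.
- by rewrite !code_points_lshift.
- rewrite /yC horner_power_sum // sum_seq_indicator; apply: eq_bigr => l _.
  by rewrite !mxE code_points_lshift code_points_rshift.
- rewrite /yC horner_power_sum // sum_seq_indicator; apply: eq_bigr => l _.
  by rewrite !mxE code_points_lshift code_points_rshift tau_sym mulrC.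
rewrite /xC horner_power_sum2 // sum_seq_indicator; apply: eq_bigr => l1 _.
rewrite sum_seq_indicator mulrC !mxE; congr (_ * _); apply: eq_bigr => l2 _.
by rewrite !mxE !code_points_rshift.
Qed.

Hypothesis Phi_psd : forall N (pts : 'I_N -> M), psd (zonal_gram (Phi k) pts).

Lemma Gamma_code_psd : psd (Gamma tau q Phi k (xC tau Pis C) (yC tau q Pis C)).
Proof. by rewrite Gamma_code_congr; apply/psd_congr/Phi_psd. Qed.

End ZonalGram.

Section CodeConstraints.
Variables (R : realType) (M : choiceType) (tau : M -> M -> R) (a b : R).
Variables (d : nat) (Pis : 'I_d -> set M) (C : seq M) (m : nat).
Hypothesis C_code : is_code tau (S_of tau a b) C.

Lemma code_tau_in u v : u \in C -> v \in C -> u != v -> a <= tau u v <= b.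
Proof. by move=> uC vC uv; have [_] := C_code.2 u v uC vC uv. Qed.

Hypothesis Pis_disj : forall i j : 'I_d, i != j -> Pis i `&` Pis j = set0.

Lemma Hm_xC_psd i j (al be : R) : i != j ->
  (forall u v, Pis i u -> Pis j v -> u <> v -> a <= tau u v <= b -> al <= tau u v <= be) ->
  psd (Hm m (fun k => xC tau Pis C k i j) al be).
Proof.
move=> ij bnd; apply: Hm_power_sum2_psd => u v uC vC; rewrite !in_setE => ui vj.
have uv : u != v.
  apply/eqP => uv; have := Pis_disj ij; rewrite -subset0 => /(_ u); apply.
  by split; rewrite // uv.
by apply: bnd => //; [apply/eqP | apply: code_tau_in].
Qed.

Variable tau0 : R.
Hypothesis tau_diag : forall u, tau u u = tau0.

Lemma Hm_xC_diag_psd i (al be : R) :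
  (forall u v, Pis i u -> Pis i v -> u <> v -> a <= tau u v <= b -> al <= tau u v <= be) ->
  psd (Hm m (fun k => xC tau Pis C k i i - part_size Pis C i * tau0 ^+ k) al be).
Proof.
move=> bnd; under eq_fun do rewrite (xC_diag_offdiag Pis tau_diag _ _ C_code.1).
apply: Hm_power_sum2_psd => u v uC vC; rewrite !in_setE => ui /andP[].
rewrite in_setE eq_sym => vi uv.
by apply: bnd => //; [apply/eqP | apply: code_tau_in].
Qed.

End CodeConstraints.

Theorem theorem7p3 (R : realType) (M : choiceType) (tau : M -> M -> R) (tau0 : R)
  (Phi : nat -> {poly R})
  (htau0 : forall u, tau u u = tau0)
  (htau_sym : forall u v, tau u v = tau v u)
  (hPhi_deg : forall k, size (Phi k) = k.+1)
  (hPhi_1 : forall k, (Phi k).[tau0] = 1)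
  (hPhi_psd : forall (k N : nat) (pts : 'I_N -> M),
      psd (\matrix_(i < N, j < N) (Phi k).[tau (pts i) (pts j)]))
  (a b : R) (hab : a < b) (htau0ab : ~ (a <= tau0 <= b))
  (m : nat) (hm : (1 <= m)%N)
  (r : nat) (q : 'I_r -> M)
  (Pi : set M) (d : nat) (Pis : 'I_d -> set M)
  (hdisj : forall i j : 'I_d, i != j -> Pis i `&` Pis j = set0)
  (hcover : Pi `<=` \bigcup_(j in [set: 'I_d]) Pis j)
  (al be : 'I_r -> 'I_d -> R)
  (halbe : forall i j, al i j <= be i j)
  (hy_bnd : forall i j u, Pis j u -> al i j <= tau (q i) u <= be i j)
  (aa bb : 'I_d -> 'I_d -> R)
  (haabb : forall i j : 'I_d, (i <= j)%N -> aa i j <= bb i j)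
  (hx_bnd : forall (i j : 'I_d) u v, (i <= j)%N -> Pis i u -> Pis j v -> u <> v ->
      a <= tau u v <= b -> aa i j <= tau u v <= bb i j)
  (Acons : (nat -> 'I_d -> 'I_d -> R) -> (nat -> 'I_r -> 'I_d -> R) -> Prop)
  (hA : forall C : seq M,
      is_code tau (S_of tau a b) C ->
      (forall u, u \in C -> Pi u) ->
      Acons (xC tau Pis C) (yC tau q Pis C)) :
  (A_code tau Pi (S_of tau a b)
   <= c_star tau m q Phi tau0 al be aa bb Acons)%E.
Proof.
apply: ge_ereal_sup => _ [C [C_code C_Pi] <-].
apply: ereal_sup_ubound; exists (part_size Pis C); last first.
  by rewrite (size_part_sum R hdisj) // => v /C_Pi /hcover[j _ vj]; exists j.
exists (xC tau Pis C), (yC tau q Pis C).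
split; [|split; [|split; [|split; [|split; [|split]]]]].
- exact: xC_sym.
- by move=> k _; apply: Gamma_code_psd => //; [rewrite hPhi_deg | apply: hPhi_psd].
- by move=> i j; apply: Hm_power_sum_psd => v _; rewrite in_setE; apply: hy_bnd.
- move=> i j ij; apply: (Hm_xC_psd _ C_code hdisj); first by rewrite neq_ltn ij.
  by move=> u v; apply: hx_bnd; apply: ltnW.
- by move=> i; apply: (Hm_xC_diag_psd _ C_code htau0) => u v; apply: hx_bnd.
- exact: hA.
- by split; [exact: yC0 | exact: part_size_ge0 | exact: moment_code_psd].
Qed.
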